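(* Let $I=(v,R,D)$ be an instance of the truck-drone problem, let $\mathcal{S}_g$ be the schedule produced by the greedy algorithm described in the context (for any tie-breaking), and let $\mathcal{S}_{OPT}$ be an optimal (maximum-length feasible) schedule for $I$. Then $\mathcal{S}_g$ is feasible and $|\mathcal{S}_{OPT}|\le 2|\mathcal{S}_g|$.
   Context: Truck-drone problem: a truck starts at $[0,0]$ at time $0$ and moves along the $x$-axis in the positive direction at speed $1$, so that at time $t$ it is at $[t,0]$. A drone with speed $v>1$ and flying range $R>0$ rides on it. An instance is $I=(v,R,D)$, with $D$ a finite multiset of points not on the positive $x$-axis. A delivery to $d$ starting at $[s,0]$ works as follows: the drone leaves at $[s,0]$, flies straight to $d$, then flies straight to meet the truck at $[r,0]$, where $r>s$ is the unique value with $|[s,0]d|+|d\,[r,0]|=v(r-s)$. The delivery is valid if $v(r-s)\le R$; we write $\mathrm{ret}(s,d)=r$. A schedule $((d_{i_1},s_1),\dots,(d_{i_m},s_m))$ (distinct indices, length $m$) is feasible if $s_1\ge0$, every delivery is valid, and the return point of delivery $j$ is $\le s_{j+1}$. Let $M=R/2$ and $m_0=\frac{R}{2v}\sqrt{v^2-1}$. For $d=[x,y]$ with $|y|\le m_0$, let $x'=M\sqrt{1-y^2/m_0^2}$, $es(d)=x-\frac{R}{2v}-x'$ and $ls(d)=x-\frac{R}{2v}+x'$; then $d$ is reachable by a valid delivery from $[s,0]$ exactly when $es(d)\le s\le ls(d)$. Greedy algorithm: set $s\gets0$ and let $U$ be the set of points of $D$ with $|y|\le m_0$. Repeat the following step.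 Let $F=\{d\in U: es(d)\le s\le ls(d)\}$. If $F\ne\emptyset$, choose $d\in F$ minimizing $\mathrm{ret}(s,d)$, append $(d,s)$ to the schedule, remove $d$ from $U$, and set $s\gets\mathrm{ret}(s,d)$. Otherwise, if some $d\in U$ has $es(d)>s$, set $s\gets\min\{es(d): d\in U, es(d)>s\}$. Otherwise stop. *)

From Stdlib Require Import Reals Lra List.
Import ListNotations.
Open Scope R_scope.

Definition point := (R * R)%type.

Definition dist (a b : point) : R :=
  sqrt ((fst a - fst b) ^ 2 + (snd a - snd b) ^ 2).

(* r is the return point ret(s,d): r > s and |[s,0]d| + |d[r,0]| = v(r-s).
   (Such r is unique; we use the defining relation.) *)
Definition is_ret (v s : R) (d : point) (r : R) : Prop :=
  s < r /\ dist (s, 0) d + dist d (r, 0) = v * (r - s).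

Definition valid_delivery (v Rg s : R) (d : point) (r : R) : Prop :=
  is_ret v s d r /\ v * (r - s) <= Rg.

Definition pt (D : list point) (i : nat) : point := nth i D (0, 0).

(* A schedule is a list of (index into D, start point s). *)
Fixpoint feasible_from (v Rg : R) (D : list point) (t : R)
    (S : list (nat * R)) : Prop :=
  match S with
  | [] => True
  | (i, s) :: S' =>
      t <= s /\
      exists r, valid_delivery v Rg s (pt D i) r /\ feasible_from v Rg D r S'
  end.

Definition feasible (v Rg : R) (D : list point) (S : list (nat * R)) : Prop :=
  NoDup (map fst S) /\
  (forall i, In i (map fst S) -> (i < length D)%nat) /\
  feasible_from v Rg D 0 S.

Definition Mg (Rg : R) : R := Rg / 2.
Definition m0 (v Rg : R) : R := Rg / (2 * v) * sqrt (v ^ 2 - 1).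
Definition xprime (v Rg : R) (d : point) : R :=
  Mg Rg * sqrt (1 - (snd d) ^ 2 / (m0 v Rg) ^ 2).
Definition es (v Rg : R) (d : point) : R :=
  fst d - Rg / (2 * v) - xprime v Rg d.
Definition ls (v Rg : R) (d : point) : R :=
  fst d - Rg / (2 * v) + xprime v Rg d.

Definition in_F (v Rg : R) (D : list point) (U : list nat) (s : R) (j : nat)
  : Prop := In j U /\ es v Rg (pt D j) <= s <= ls v Rg (pt D j).

Definition remove_idx (i : nat) (U : list nat) : list nat :=
  filter (fun j => negb (Nat.eqb j i)) U.

(* greedy_run v Rg D s U acc final : starting from current position s,
   remaining set U (indices) and schedule built so far acc, the greedy
   algorithm (with some tie-breaking) terminates with schedule final. *)
Inductive greedy_run (v Rg : R) (D : list point)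
  : R -> list nat -> list (nat * R) -> list (nat * R) -> Prop :=
| gr_pick : forall s U acc final i r,
    in_F v Rg D U s i ->
    is_ret v s (pt D i) r ->
    (forall j rj, in_F v Rg D U s j -> is_ret v s (pt D j) rj -> r <= rj) ->
    greedy_run v Rg D r (remove_idx i U) (acc ++ [(i, s)]) final ->
    greedy_run v Rg D s U acc final
| gr_jump : forall s U acc final j,
    (forall k, ~ in_F v Rg D U s k) ->
    In j U -> s < es v Rg (pt D j) ->
    (forall k, In k U -> s < es v Rg (pt D k) -> es v Rg (pt D j) <= es v Rg (pt D k)) ->
    greedy_run v Rg D (es v Rg (pt D j)) U acc final ->
    greedy_run v Rg D s U acc final
| gr_stop : forall s U acc,
    (forall k, ~ in_F v Rg D U s k) ->
    (forall k, In k U -> es v Rg (pt D k) <= s) ->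
    greedy_run v Rg D s U acc acc.

Definition U0 (v Rg : R) (D : list point) : list nat :=
  filter (fun i => if Rle_dec (Rabs (snd (pt D i))) (m0 v Rg) then true else false)
         (seq 0 (length D)).

Definition greedy_schedule (v Rg : R) (D : list point) (S : list (nat * R)) : Prop :=
  greedy_run v Rg D 0 (U0 v Rg D) [] S.

From Stdlib Require Import Reals Lra Lia List.
Import ListNotations.
Open Scope R_scope.

(* A drone launched at [s,0] can serve d exactly when d lies in the ellipse
   with foci [s,0], [s + R/v,0] and major axis R, i.e. when es(d) <= s <= ls(d);
   moreover the return point grows with the start point.  Consider an optimal
   delivery to a point the greedy algorithm never serves.  If it starts while
   the greedy drone is out, it cannot return before the greedy drone does; if
   it starts while the greedy algorithm waits or has stopped, the point was not
   servable at that time.  So each greedy delivery blocks at most one such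
   optimal delivery, and all other optimal deliveries serve distinct points of
   the greedy schedule. *)

Lemma abs_le_iff_sqr_le (x w : R) : 0 <= w -> Rabs x <= w <-> x ^ 2 <= w ^ 2.
Proof.
  intros Hw. rewrite <- (pow2_abs x). pose proof (Rabs_pos x) as Hx.
  split; intros Hle; nra.
Qed.

Lemma Rabs_le_iff (a b : R) : Rabs a <= b <-> - b <= a <= b.
Proof.
  split; [| apply Rabs_le].
  intros Hab. pose proof (Rle_abs a); pose proof (Rle_abs (- a)).
  rewrite Rabs_Ropp in *. lra.
Qed.

Lemma pow2_le_reg (a b : R) : 0 <= b -> a ^ 2 <= b ^ 2 -> a <= b.
Proof.
  intros Hb Hab. apply (Rle_trans _ (Rabs a)); [apply Rle_abs |].
  now apply abs_le_iff_sqr_le.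
Qed.

Lemma sqrt_le_of_sqr_le (z w : R) : 0 <= w -> z <= w ^ 2 -> sqrt z <= w.
Proof. intros Hw Hz. rewrite <- (sqrt_pow2 w Hw). now apply sqrt_le_1_alt. Qed.

Lemma pow2_sqrt_sum_sqr (a b : R) : sqrt (a ^ 2 + b ^ 2) ^ 2 = a ^ 2 + b ^ 2.
Proof. apply pow2_sqrt. pose proof (pow2_ge_0 a); pose proof (pow2_ge_0 b); lra. Qed.

Lemma dist_sym (a b : point) : dist a b = dist b a.
Proof. unfold dist; f_equal; ring. Qed.

Lemma dist_axis (a : R) (d : point) :
  dist (a, 0) d = sqrt ((fst d - a) ^ 2 + snd d ^ 2).
Proof. unfold dist; simpl; f_equal; ring. Qed.

Lemma dist_axis_triangle (a b : R) (d : point) :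
  dist (a, 0) d <= Rabs (a - b) + dist (b, 0) d.
Proof.
  rewrite !dist_axis. destruct d as [x y]; cbn [fst snd].
  set (Q := sqrt ((x - b) ^ 2 + y ^ 2)).
  assert (HQ : 0 <= Q) by apply sqrt_pos.
  assert (HQ2 : Q ^ 2 = (x - b) ^ 2 + y ^ 2) by (apply pow2_sqrt_sum_sqr).
  assert (Hxb : Rabs (x - b) <= Q) by (apply abs_le_iff_sqr_le; [exact HQ |];
    rewrite HQ2; pose proof (pow2_ge_0 y); lra).
  assert (Hcross : (x - b) * (b - a) <= Q * Rabs (a - b)).
  { rewrite Rabs_minus_sym.
    apply (Rle_trans _ (Rabs (x - b) * Rabs (b - a))).
    - rewrite <- Rabs_mult. apply Rle_abs.
    - apply Rmult_le_compat_r; [apply Rabs_pos | exact Hxb]. }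
  pose proof (Rabs_pos (a - b)) as Hab. pose proof (pow2_abs (a - b)) as Hab2.
  apply sqrt_le_of_sqr_le; [lra |].
  replace ((Rabs (a - b) + Q) ^ 2)
    with (Rabs (a - b) ^ 2 + 2 * (Q * Rabs (a - b)) + Q ^ 2) by ring.
  rewrite Hab2, HQ2. lra.
Qed.

Lemma focal_sum_le_iff (c M m X y : R) :
  0 < c < M -> 0 < m -> m ^ 2 = M ^ 2 - c ^ 2 ->
  sqrt ((X + c) ^ 2 + y ^ 2) + sqrt ((X - c) ^ 2 + y ^ 2) <= 2 * M <->
  X ^ 2 * m ^ 2 + M ^ 2 * y ^ 2 <= M ^ 2 * m ^ 2.
Proof.
  intros Hc Hm Hmc.
  set (P := sqrt ((X + c) ^ 2 + y ^ 2)); set (Q := sqrt ((X - c) ^ 2 + y ^ 2)).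
  assert (HP : 0 <= P) by apply sqrt_pos.
  assert (HQ : 0 <= Q) by apply sqrt_pos.
  assert (HP2 : P ^ 2 = (X + c) ^ 2 + y ^ 2) by (apply pow2_sqrt_sum_sqr).
  assert (HQ2 : Q ^ 2 = (X - c) ^ 2 + y ^ 2) by (apply pow2_sqrt_sum_sqr).
  (* As P^2 - Q^2 = 4 c X, squaring P <= 2 M - Q gives M Q <= M^2 - c X, and
     squaring once more gives the ellipse inequality. *)
  assert (Hkey : (M ^ 2 - c * X) ^ 2 - (M * Q) ^ 2
                 = M ^ 2 * m ^ 2 - X ^ 2 * m ^ 2 - M ^ 2 * y ^ 2).
  { replace ((M * Q) ^ 2) with (M ^ 2 * Q ^ 2) by ring. rewrite HQ2, Hmc. ring. }
  assert (HPQ : P ^ 2 - Q ^ 2 = 4 * c * X) by (rewrite HP2, HQ2; ring).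
  split; intros H.
  - assert (HP2M : P ^ 2 <= (2 * M - Q) ^ 2) by nra.
    assert (HMQ : M * Q <= M ^ 2 - c * X) by nra.
    assert (HMQ2 : (M * Q) ^ 2 <= (M ^ 2 - c * X) ^ 2)
      by (apply pow_incr; split; [nra | exact HMQ]).
    lra.
  - assert (HX : X ^ 2 <= M ^ 2).
    { apply (Rmult_le_reg_r (m ^ 2)); [nra |].
      pose proof (pow2_ge_0 (M * y)). nra. }
    assert (HXM : - M <= X <= M)
      by (apply Rabs_le_iff, abs_le_iff_sqr_le; [lra | exact HX]).
    assert (HMQ2 : (M * Q) ^ 2 <= (M ^ 2 - c * X) ^ 2) by lra.
    assert (HMQ : M * Q <= M ^ 2 - c * X)
      by (apply pow2_le_reg; [nra | exact HMQ2]).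
    assert (HQM : Q <= 2 * M) by nra.
    assert (HP2M : P ^ 2 <= (2 * M - Q) ^ 2) by nra.
    apply pow2_le_reg in HP2M; lra.
Qed.

Lemma ellipse_iff_window (M m X y : R) :
  0 < M -> 0 < m ->
  X ^ 2 * m ^ 2 + M ^ 2 * y ^ 2 <= M ^ 2 * m ^ 2 <->
  Rabs y <= m /\ Rabs X <= M * sqrt (1 - y ^ 2 / m ^ 2).
Proof.
  intros HM Hm.
  assert (Hm2 : 0 < m ^ 2) by nra.
  assert (Hwindow : y ^ 2 <= m ^ 2 ->
            (X ^ 2 * m ^ 2 + M ^ 2 * y ^ 2 <= M ^ 2 * m ^ 2 <->
             Rabs X <= M * sqrt (1 - y ^ 2 / m ^ 2))).
  { intros Hy.
    assert (Hz : 0 <= 1 - y ^ 2 / m ^ 2).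
    { replace (1 - y ^ 2 / m ^ 2) with ((m ^ 2 - y ^ 2) / m ^ 2) by (field; lra).
      apply Rmult_le_pos; [lra | apply Rlt_le, Rinv_0_lt_compat; lra]. }
    assert (HW : 0 <= M * sqrt (1 - y ^ 2 / m ^ 2))
      by (apply Rmult_le_pos; [lra | apply sqrt_pos]).
    assert (HW2 : (M * sqrt (1 - y ^ 2 / m ^ 2)) ^ 2 * m ^ 2
                  = M ^ 2 * m ^ 2 - M ^ 2 * y ^ 2).
    { rewrite Rpow_mult_distr, pow2_sqrt by exact Hz. field. lra. }
    rewrite abs_le_iff_sqr_le by exact HW.
    split; intros H; nra. }
  rewrite (abs_le_iff_sqr_le y) by lra.
  split.
  - intros H.
    assert (Hy : y ^ 2 <= m ^ 2).
    { apply (Rmult_le_reg_l (M ^ 2)); [nra |].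
      pose proof (pow2_ge_0 (X * m)). nra. }
    split; [exact Hy | now apply Hwindow].
  - intros [Hy HX]. now apply Hwindow.
Qed.

Section Drone.
Variables v Rg : R.
Hypothesis Hv : 1 < v.
Hypothesis HR : 0 < Rg.

Definition servable (s : R) (d : point) : Prop :=
  dist (s, 0) d + dist d (s + Rg / v, 0) <= Rg.

Lemma valid_delivery_duration s d r : valid_delivery v Rg s d r -> r - s <= Rg / v.
Proof.
  intros [_ Hrange]. apply (Rmult_le_reg_l v); [lra |].
  replace (v * (Rg / v)) with Rg by (field; lra). exact Hrange.
Qed.

Lemma valid_delivery_servable s d r :
  valid_delivery v Rg s d r -> servable s d.
Proof.
  intros Hd. pose proof (valid_delivery_duration s d r Hd) as Hr.
  destruct Hd as [[Hsr Hret] _]. unfold servable.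
  assert (Hvr : v * (Rg / v) = Rg) by (field; lra).
  pose proof (dist_axis_triangle (s + Rg / v) r d) as Htri.
  rewrite Rabs_right in Htri by lra.
  rewrite (dist_sym d (r, 0)) in Hret. rewrite (dist_sym d). nra.
Qed.

Lemma servable_valid_delivery s d r :
  servable s d -> is_ret v s d r -> valid_delivery v Rg s d r.
Proof.
  intros Hd [Hsr Hret]. split; [split; assumption |].
  unfold servable in Hd.
  assert (Hvr : v * (Rg / v) = Rg) by (field; lra).
  destruct (Rle_dec r (s + Rg / v)) as [Hr | Hr]; [nra |].
  pose proof (dist_axis_triangle r (s + Rg / v) d) as Htri.
  rewrite Rabs_right in Htri by lra.
  rewrite (dist_sym d (r, 0)) in Hret. rewrite (dist_sym d) in Hd. nra.
Qed.

Lemma servable_latest_start s d r :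
  valid_delivery v Rg s d r -> servable (r - Rg / v) d.
Proof.
  intros Hd. pose proof (valid_delivery_duration s d r Hd) as Hr.
  destruct Hd as [[Hsr Hret] _]. unfold servable.
  assert (Hvr : v * (Rg / v) = Rg) by (field; lra).
  pose proof (dist_axis_triangle (r - Rg / v) s d) as Htri.
  rewrite Rabs_left1 in Htri by lra.
  replace (r - Rg / v + Rg / v) with r by ring. nra.
Qed.

Lemma is_ret_mono s s' d r r' :
  s <= s' -> is_ret v s d r -> is_ret v s' d r' -> r <= r'.
Proof.
  intros Hs [Hsr Hret] [Hsr' Hret'].
  destruct (Rle_dec r r') as [Hr | Hr]; [exact Hr | exfalso].
  pose proof (dist_axis_triangle s s' d) as Htri.
  pose proof (dist_axis_triangle r r' d) as Htri'.
  rewrite Rabs_left1 in Htri by lra. rewrite Rabs_right in Htri' by lra.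
  rewrite !(dist_sym d) in Hret, Hret'. nra.
Qed.

Lemma is_ret_exists (s : R) (d : point) : d <> (s, 0) -> exists r, is_ret v s d r.
Proof.
  intros Hd. destruct d as [x y].
  set (X := x - s). set (A := sqrt (X ^ 2 + y ^ 2)).
  assert (HA2 : A ^ 2 = X ^ 2 + y ^ 2) by apply pow2_sqrt_sum_sqr.
  assert (HA : 0 < A).
  { apply sqrt_lt_R0.
    pose proof (pow2_ge_0 X) as HX2; pose proof (pow2_ge_0 y) as Hy2.
    destruct (Req_dec X 0) as [HX | HX].
    - destruct (Req_dec y 0) as [Hy | Hy].
      + exfalso. apply Hd. unfold X in HX. f_equal; lra.
      + pose proof (pow_nonzero y 2 Hy). lra.
    - pose proof (pow_nonzero X 2 HX). lra. }
  assert (HXA : X <= A) by (apply pow2_le_reg; pose proof (pow2_ge_0 y); lra).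
  (* r = s + u where u > 0 solves (v u - A)^2 = (X - u)^2 + y^2,
     i.e. u (v^2 - 1) = 2 (v A - X). *)
  set (u := 2 * (v * A - X) / (v ^ 2 - 1)).
  assert (Hu : u * (v ^ 2 - 1) = 2 * (v * A - X)) by (unfold u; field; nra).
  assert (Hu0 : 0 < u) by (unfold u; apply Rdiv_lt_0_compat; nra).
  assert (HvuA : 0 <= v * u - A).
  { apply (Rmult_le_reg_r (v ^ 2 - 1)); [nra |].
    assert (Hid : (v * u - A) * (v ^ 2 - 1) = A * (v - 1) ^ 2 + 2 * v * (A - X)).
    { transitivity (v * (u * (v ^ 2 - 1)) - A * (v ^ 2 - 1)); [ring |].
      rewrite Hu. ring. }
    rewrite Rmult_0_l, Hid. pose proof (pow2_ge_0 (v - 1)). nra. }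
  exists (s + u). split; [lra |].
  rewrite dist_axis, dist_sym, dist_axis; cbn [fst snd]. fold X A.
  replace (x - (s + u)) with (X - u) by (unfold X; ring).
  rewrite (sqrt_lem_1 _ (v * u - A)); [ring | | exact HvuA | nra].
  pose proof (pow2_ge_0 (X - u)); pose proof (pow2_ge_0 y); lra.
Qed.

Lemma focal_params :
  0 < Rg / (2 * v) < Mg Rg /\ 0 < m0 v Rg /\
  m0 v Rg ^ 2 = Mg Rg ^ 2 - (Rg / (2 * v)) ^ 2.
Proof.
  unfold Mg, m0.
  assert (Hs : 0 < sqrt (v ^ 2 - 1)) by (apply sqrt_lt_R0; nra).
  assert (Hs2 : sqrt (v ^ 2 - 1) ^ 2 = v ^ 2 - 1) by (apply pow2_sqrt; nra).
  assert (Hc : 0 < Rg / (2 * v)) by (apply Rdiv_lt_0_compat; lra).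
  split; [split | split].
  - exact Hc.
  - apply (Rmult_lt_reg_r (2 * v)); [lra |]. field_simplify; nra.
  - now apply Rmult_lt_0_compat.
  - rewrite Rpow_mult_distr, Hs2. field. lra.
Qed.

Lemma servable_iff_window s d :
  servable s d <-> Rabs (snd d) <= m0 v Rg /\ es v Rg d <= s <= ls v Rg d.
Proof.
  destruct focal_params as [Hc [Hm Hmc]].
  unfold servable, es, ls. rewrite (dist_sym d), !dist_axis.
  set (c := Rg / (2 * v)) in *. set (X := fst d - s - c).
  replace (fst d - s) with (X + c) by (unfold X; ring).
  replace (fst d - (s + Rg / v)) with (X - c) by (unfold X, c; field; lra).
  pose proof (focal_sum_le_iff c (Mg Rg) (m0 v Rg) X (snd d) Hc Hm Hmc) as Hfocal.
  replace (2 * Mg Rg) with Rg in Hfocal by (unfold Mg; field).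
  rewrite Hfocal, ellipse_iff_window by lra.
  change (Mg Rg * sqrt (1 - snd d ^ 2 / m0 v Rg ^ 2)) with (xprime v Rg d).
  rewrite (Rabs_le_iff X). unfold X. split; intros [Hy Hs]; split; lra.
Qed.

Lemma valid_delivery_window s d r :
  valid_delivery v Rg s d r -> Rabs (snd d) <= m0 v Rg /\ es v Rg d <= s <= ls v Rg d.
Proof. intros Hd. now apply servable_iff_window, (valid_delivery_servable s d r). Qed.

Lemma window_valid_delivery (s : R) (d : point) (r : R) :
  Rabs (snd d) <= m0 v Rg -> es v Rg d <= s <= ls v Rg d ->
  is_ret v s d r -> valid_delivery v Rg s d r.
Proof.
  intros Hy Hs Hr. apply servable_valid_delivery; [| exact Hr].
  now apply servable_iff_window.
Qed.

End Drone.

Definition memb (k : nat) (l : list nat) : bool :=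
  if in_dec Nat.eq_dec k l then true else false.

Lemma membP (k : nat) (l : list nat) : reflect (In k l) (memb k l).
Proof. unfold memb. destruct (in_dec Nat.eq_dec k l); constructor; assumption. Qed.

Lemma In_remove_idx (i k : nat) (U : list nat) :
  In k (remove_idx i U) <-> In k U /\ k <> i.
Proof.
  unfold remove_idx. rewrite filter_In, Bool.negb_true_iff, Nat.eqb_neq. reflexivity.
Qed.

Definition count_in (f : nat -> bool) (L : list (nat * R)) : nat :=
  length (filter (fun p => f (fst p)) L).

Lemma count_in_ext (f g : nat -> bool) (L : list (nat * R)) :
  (forall k, f k = g k) -> count_in f L = count_in g L.
Proof. intros Hfg. unfold count_in. f_equal. apply filter_ext. intros p. apply Hfg. Qed.

Lemma count_in_memb_le (G : list nat) (L : list (nat * R)) :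
  NoDup (map fst L) -> (count_in (fun k => memb k G) L <= length G)%nat.
Proof.
  intros Hnd. unfold count_in.
  rewrite <- (length_map fst), <- (filter_map_swap (fun k => memb k G)).
  apply NoDup_incl_length; [now apply NoDup_filter |].
  intros k Hk. apply filter_In in Hk as [_ Hk]. now destruct (membP k G).
Qed.

Section Schedules.
Variables (v Rg : R) (D : list point).

Lemma feasible_from_mono t t' L :
  t <= t' -> feasible_from v Rg D t' L -> feasible_from v Rg D t L.
Proof.
  destruct L as [| [i s] L]; [trivial |].
  intros Htt' [Hts Hrest]. split; [lra | exact Hrest].
Qed.

Lemma feasible_from_In t L k s :
  feasible_from v Rg D t L -> In (k, s) L ->
  t <= s /\ exists r, valid_delivery v Rg s (pt D k) r.
Proof.
  revert t. induction L as [| [i s0] L IH]; intros t HL Hin; [destruct Hin |].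
  destruct HL as [Hts0 [r [Hr HL]]]. destruct Hin as [Heq | Hin].
  - injection Heq as <- <-. split; [exact Hts0 | now exists r].
  - destruct (IH r HL Hin) as [Hrs Hk]. split; [| exact Hk].
    destruct Hr as [[Hs0r _] _]. lra.
Qed.

Lemma count_in_le_fresh_start_after (f : nat -> bool) (T : R) (B : nat) t L :
  feasible_from v Rg D t L ->
  (forall t' L', T <= t' -> feasible_from v Rg D t' L' -> (count_in f L' <= B)%nat) ->
  (forall k s r, t <= s -> valid_delivery v Rg s (pt D k) r -> f k = true -> T <= s) ->
  (count_in f L <= B)%nat.
Proof.
  revert t. induction L as [| [k s] L IH]; intros t HL Hafter Hfresh; [apply Nat.le_0_l |].
  destruct (Rlt_le_dec s T) as [HsT | HTs].
  - destruct HL as [Hts [r [Hr HL]]].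
    assert (Hk : f k = false).
    { destruct (f k) eqn:Hfk; [| reflexivity].
      pose proof (Hfresh k s r Hts Hr Hfk). lra. }
    unfold count_in; simpl; rewrite Hk. apply (IH r HL Hafter).
    intros k' s' r' Hrs'. apply Hfresh. destruct Hr as [[Hsr _] _]. lra.
  - apply (Hafter s); [exact HTs |].
    destruct HL as [_ Hrest]. split; [lra | exact Hrest].
Qed.

Lemma count_in_le_S_fresh_return_after (f : nat -> bool) (T : R) (B : nat) t L :
  feasible_from v Rg D t L ->
  (forall t' L', T <= t' -> feasible_from v Rg D t' L' -> (count_in f L' <= B)%nat) ->
  (forall k s r, t <= s -> valid_delivery v Rg s (pt D k) r -> f k = true -> T <= r) ->
  (count_in f L <= S B)%nat.
Proof.
  revert t. induction L as [| [k s] L IH]; intros t HL Hafter Hfresh; [apply Nat.le_0_l |].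
  destruct (Rlt_le_dec s T) as [HsT | HTs].
  - destruct HL as [Hts [r [Hr HL]]].
    unfold count_in; simpl. destruct (f k) eqn:Hfk; simpl.
    + apply le_n_S, (Hafter r); [exact (Hfresh k s r Hts Hr Hfk) | exact HL].
    + apply (IH r HL Hafter).
      intros k' s' r' Hrs'. apply Hfresh. destruct Hr as [[Hsr _] _]. lra.
  - apply le_S, (Hafter s); [exact HTs |].
    destruct HL as [_ Hrest]. split; [lra | exact Hrest].
Qed.

End Schedules.

Section Greedy.
Variables (v Rg : R) (D : list point).
Hypothesis Hv : 1 < v.
Hypothesis HR : 0 < Rg.
Hypothesis HD : forall d, In d D -> ~ (snd d = 0 /\ 0 <= fst d).

(* [greedy_run] without its accumulator: [S] is what the greedy algorithm
   appends from position [s] on, with [U] still unserved. *)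
Inductive greedy_from : R -> list nat -> list (nat * R) -> Prop :=
| greedy_pick s U S i r :
    in_F v Rg D U s i -> is_ret v s (pt D i) r ->
    (forall j rj, in_F v Rg D U s j -> is_ret v s (pt D j) rj -> r <= rj) ->
    greedy_from r (remove_idx i U) S -> greedy_from s U ((i, s) :: S)
| greedy_jump s U S j :
    (forall k, ~ in_F v Rg D U s k) -> In j U -> s < es v Rg (pt D j) ->
    (forall k, In k U -> s < es v Rg (pt D k) -> es v Rg (pt D j) <= es v Rg (pt D k)) ->
    greedy_from (es v Rg (pt D j)) U S -> greedy_from s U S
| greedy_stop s U :
    (forall k, ~ in_F v Rg D U s k) -> (forall k, In k U -> es v Rg (pt D k) <= s) ->
    greedy_from s U [].

Lemma greedy_run_from s U acc final :
  greedy_run v Rg D s U acc final -> exists S, final = acc ++ S /\ greedy_from s U S.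
Proof.
  induction 1 as [s U acc final i r HFi Hri Hmin _ [S [-> HS]]
                 | s U acc final j HnF Hj Hsj Hmin _ [S [-> HS]]
                 | s U acc HnF Hall].
  - exists ((i, s) :: S). rewrite <- app_assoc. split; [reflexivity |].
    now apply (greedy_pick s U S i r).
  - exists S. split; [reflexivity |]. now apply (greedy_jump s U S j).
  - exists []. rewrite app_nil_r. split; [reflexivity |]. now apply greedy_stop.
Qed.

Lemma In_U0 k :
  In k (U0 v Rg D) <-> (k < length D)%nat /\ Rabs (snd (pt D k)) <= m0 v Rg.
Proof.
  unfold U0. rewrite filter_In, in_seq.
  destruct (Rle_dec (Rabs (snd (pt D k))) (m0 v Rg)); intuition (lia || discriminate).
Qed.

Lemma pt_off_axis k s : (k < length D)%nat -> 0 <= s -> pt D k <> (s, 0).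
Proof.
  intros Hk Hs Heq. apply (HD (pt D k)); [now apply nth_In |].
  rewrite Heq. split; [reflexivity | exact Hs].
Qed.

Lemma in_F_of_valid_delivery U k s s' r' :
  In k U -> es v Rg (pt D k) <= s -> s <= s' ->
  valid_delivery v Rg s' (pt D k) r' -> in_F v Rg D U s k.
Proof.
  intros HkU Hes Hss' Hk. split; [exact HkU |].
  destruct (valid_delivery_window v Rg Hv HR _ _ _ Hk) as [_ Hwin]. lra.
Qed.

Lemma pick_return_le s U i r k s' r' :
  0 <= s -> incl U (U0 v Rg D) ->
  in_F v Rg D U s i -> is_ret v s (pt D i) r ->
  (forall j rj, in_F v Rg D U s j -> is_ret v s (pt D j) rj -> r <= rj) ->
  In k U -> s <= s' -> valid_delivery v Rg s' (pt D k) r' -> r <= r'.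
Proof.
  intros Hs HU HFi Hri Hmin HkU Hss' Hk.
  destruct (Rle_dec (es v Rg (pt D k)) s) as [Hes | Hes].
  - (* d_k was a candidate at s, whose return r_k is compared with r by greediness *)
    destruct (proj1 (In_U0 k) (HU k HkU)) as [Hklen _].
    destruct (is_ret_exists v Hv s (pt D k) (pt_off_axis k s Hklen Hs)) as [rk Hrk].
    apply (Rle_trans _ rk).
    + apply (Hmin k rk); [now apply (in_F_of_valid_delivery U k s s' r') | exact Hrk].
    + destruct Hk as [Hk _]. exact (is_ret_mono v Hv s s' (pt D k) rk r' Hss' Hrk Hk).
  - (* otherwise even the latest possible start r' - R/v of the delivery is after s *)
    destruct HFi as [HiU Hwin]. destruct (proj1 (In_U0 i) (HU i HiU)) as [_ Hiy].
    pose proof (window_valid_delivery v Rg Hv HR s (pt D i) r Hiy Hwin Hri) as Hi.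
    pose proof (servable_latest_start v Rg Hv s' (pt D k) r' Hk) as Hlate.
    apply servable_iff_window in Hlate; [| exact Hv | exact HR].
    pose proof (valid_delivery_duration v Rg Hv s (pt D i) r Hi). lra.
Qed.

Lemma jump_start_le s U j k s' r' :
  (forall k, ~ in_F v Rg D U s k) ->
  (forall k, In k U -> s < es v Rg (pt D k) -> es v Rg (pt D j) <= es v Rg (pt D k)) ->
  In k U -> s <= s' -> valid_delivery v Rg s' (pt D k) r' -> es v Rg (pt D j) <= s'.
Proof.
  intros HnF Hmin HkU Hss' Hk.
  destruct (Rle_dec (es v Rg (pt D k)) s) as [Hes | Hes].
  - exfalso. apply (HnF k). now apply (in_F_of_valid_delivery U k s s' r').
  - destruct (valid_delivery_window v Rg Hv HR _ _ _ Hk) as [_ Hwin].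
    specialize (Hmin k HkU). lra.
Qed.

Lemma greedy_from_feasible s U S :
  greedy_from s U S -> incl U (U0 v Rg D) ->
  feasible_from v Rg D s S /\ NoDup (map fst S) /\ incl (map fst S) U.
Proof.
  induction 1 as [s U S i r HFi Hri _ _ IH | s U S j _ _ Hsj _ _ IH | s U _ _]; intros HU.
  - assert (HU' : incl (remove_idx i U) U)
      by (intros k Hk; now apply In_remove_idx in Hk as [Hk _]).
    destruct (IH (incl_tran HU' HU)) as [HS [Hnd Hincl]].
    destruct HFi as [HiU Hwin]. destruct (proj1 (In_U0 i) (HU i HiU)) as [_ Hiy].
    split; [| split].
    + split; [apply Rle_refl |]. exists r.
      split; [now apply window_valid_delivery | exact HS].
    + constructor; [| exact Hnd].
      intros Hi. apply Hincl, In_remove_idx in Hi. now destruct Hi.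
    + intros k [<- | Hk]; [exact HiU | now apply HU', Hincl].
  - destruct (IH HU) as [HS Hrest]. split; [| exact Hrest].
    apply (feasible_from_mono v Rg D _ (es v Rg (pt D j))); [lra | exact HS].
  - split; [exact I | split; [constructor | intros k []]].
Qed.

Definition fresh (U G : list nat) (k : nat) : bool := memb k U && negb (memb k G).

Lemma fresh_cons (U G : list nat) (i k : nat) :
  fresh U (i :: G) k = fresh (remove_idx i U) G k.
Proof.
  unfold fresh.
  destruct (membP k U), (membP k (i :: G)), (membP k (remove_idx i U)), (membP k G);
    simpl in *; rewrite ?In_remove_idx in *; intuition (subst; tauto).
Qed.

Lemma fresh_In (U G : list nat) (k : nat) : fresh U G k = true -> In k U.
Proof. unfold fresh. destruct (membP k U); [trivial | discriminate]. Qed.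

Lemma greedy_from_count_fresh s U S :
  greedy_from s U S -> 0 <= s -> incl U (U0 v Rg D) ->
  forall t L, s <= t -> feasible_from v Rg D t L ->
  (count_in (fresh U (map fst S)) L <= length S)%nat.
Proof.
  induction 1 as [s U S i r HFi Hri Hmin _ IH | s U S j HnF _ Hsj Hmin _ IH | s U HnF Hall];
    intros Hs HU t L Hst HL.
  - assert (Hsr : s < r) by (destruct Hri; assumption).
    assert (HU' : incl (remove_idx i U) U)
      by (intros k Hk; now apply In_remove_idx in Hk as [Hk _]).
    simpl map. rewrite (count_in_ext _ _ L (fresh_cons U (map fst S) i)).
    apply (count_in_le_S_fresh_return_after v Rg D _ r _ t); [exact HL | |].
    + intros t' L' Hrt' HL'. apply (IH ltac:(lra) (incl_tran HU' HU) t'); assumption.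
    + intros k s' r' Hts' Hk Hfk.
      apply (pick_return_le s U i r k s' r' Hs HU HFi Hri Hmin); [| lra | exact Hk].
      now apply HU', (fresh_In _ (map fst S)).
  - apply (count_in_le_fresh_start_after v Rg D _ (es v Rg (pt D j)) _ t); [exact HL | |].
    + intros t' L' Ht' HL'. apply (IH ltac:(lra) HU t'); assumption.
    + intros k s' r' Hts' Hk Hfk.
      apply (jump_start_le s U j k s' r' HnF Hmin); [| lra | exact Hk].
      now apply (fresh_In _ (map fst S)).
  - unfold count_in. rewrite (filter_ext_in _ (fun _ => false)).
    { rewrite filter_false. apply le_n. }
    intros [k s'] Hin. simpl. destruct (fresh U [] k) eqn:Hfk; [exfalso | reflexivity].
    apply fresh_In in Hfk.
    destruct (feasible_from_In v Rg D t L k s' HL Hin) as [Hts' [r' Hk]].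
    apply (HnF k), (in_F_of_valid_delivery U k s s' r'); [exact Hfk | | lra | exact Hk].
    now apply Hall.
Qed.

Lemma feasible_indices_U0 L : feasible v Rg D L -> incl (map fst L) (U0 v Rg D).
Proof.
  intros [_ [Hlen HL]] k Hk. apply In_U0. split; [now apply Hlen |].
  apply in_map_iff in Hk as [[k' s] [<- Hin]].
  destruct (feasible_from_In v Rg D 0 L k' s HL Hin) as [_ [r Hr]].
  exact (proj1 (valid_delivery_window v Rg Hv HR _ _ _ Hr)).
Qed.

Lemma feasible_length_split G L :
  feasible v Rg D L ->
  length L = (count_in (fun k => memb k G) L + count_in (fresh (U0 v Rg D) G) L)%nat.
Proof.
  intros HL. unfold count_in.
  rewrite <- (filter_length (fun p => memb (fst p) G) L). do 2 f_equal.
  apply filter_ext_in. intros [k s] Hin. unfold fresh. simpl.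
  destruct (membP k (U0 v Rg D)) as [_ | Hk]; [reflexivity |].
  exfalso. apply Hk, (feasible_indices_U0 L HL), in_map_iff. now exists (k, s).
Qed.

End Greedy.

Theorem theorem4p1 (v Rg : R) (D : list point)
  (Hv : 1 < v) (HR : 0 < Rg)
  (HD : forall d, In d D -> ~ (snd d = 0 /\ 0 <= fst d))
  (Sg : list (nat * R)) (Hg : greedy_schedule v Rg D Sg) :
  feasible v Rg D Sg /\
  (forall Sopt, feasible v Rg D Sopt -> (length Sopt <= 2 * length Sg)%nat).
Proof.
  destruct (greedy_run_from v Rg D _ _ _ _ Hg) as [S [HSg Hrun]]. simpl in HSg. subst S.
  destruct (greedy_from_feasible v Rg D Hv HR _ _ _ Hrun (incl_refl _)) as [Hfeas [Hnd Hincl]].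
  split.
  - split; [exact Hnd | split; [| exact Hfeas]].
    intros i Hi. now apply (In_U0 v Rg D), Hincl.
  - intros Sopt Hopt.
    pose proof (count_in_memb_le (map fst Sg) Sopt (proj1 Hopt)) as Hserved.
    pose proof (greedy_from_count_fresh v Rg D Hv HR HD _ _ _ Hrun (Rle_refl 0)
                  (incl_refl _) 0 Sopt (Rle_refl 0) (proj2 (proj2 Hopt))) as Hfresh.
    rewrite length_map in Hserved.
    rewrite (feasible_length_split v Rg D Hv HR (map fst Sg) Sopt Hopt). lia.
Qed.
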